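(* Suppose $$S^{**}<\min\left\{\frac{\mu_1'-\mu_0}{\alpha_1},\ \frac{\mu_2'-\mu_0}{\alpha_2},\ \frac{\mu_3'-\mu_0}{\hat\alpha_3}\right\},$$ where $\hat\alpha_3=\alpha_3+\beta_1+\beta_2$. Then for every solution of the system below with nonnegative initial data and $S(0)>0$, $$\lim_{t\to\infty}I_1(t)=\lim_{t\to\infty}I_2(t)=\lim_{t\to\infty}I_{12}(t)=\lim_{t\to\infty}R(t)=0,\qquad \lim_{t\to\infty}S(t)=S^{**},$$ i.e. the disease-free equilibrium $G_2=(S^{**},0,0,0,0)$ is globally asymptotically stable (with respect to solutions with $S(0)>0$).
   Context: Consider, for $t\ge0$, the system $S'=\big(b(1-\tfrac{N}{K})-\alpha_1I_1-\alpha_2I_2-(\beta_1+\beta_2+\alpha_3)I_{12}-\mu_0\big)S$, $I_1'=\big(b(1-\tfrac{N}{K})+\alpha_1S-\eta_1I_{12}-\gamma_1I_2-\mu_1\big)I_1+\beta_1SI_{12}$, $I_2'=\big(b(1-\tfrac{N}{K})+\alpha_2S-\eta_2I_{12}-\gamma_2I_1-\mu_2\big)I_2+\beta_2SI_{12}$, $I_{12}'=\big(b(1-\tfrac{N}{K})+\alpha_3S+\eta_1I_1+\eta_2I_2-\mu_3\big)I_{12}+(\gamma_1+\gamma_2)I_1I_2$, $R'=\big(b(1-\tfrac{N}{K})-\mu_4'\big)R+\rho_1I_1+\rho_2I_2+\rho_3I_{12}$, where $N=S+I_1+I_2+I_{12}+R$. All parameters $b,K,\alpha_i,\beta_i,\gamma_i,\eta_i,\rho_i,\mu_0,\mu_i'$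 are positive and $\mu_i=\rho_i+\mu_i'$ for $i=1,2,3$. Standing assumptions: $b>\mu_0$, $b>\mu_i$ ($i=1,2,3$), $b>\mu_4'$, and $\mu_0<\mu_4'<\mu_j'$ for $j=1,2,3$. Set $\sigma_k=(\mu_k-\mu_0)/\alpha_k$ ($k=1,2,3$), assumed to satisfy $\sigma_1<\sigma_2<\sigma_3$, and $S^{**}=\frac{K}{b}(b-\mu_0)$. *)

From Stdlib Require Import Reals.
From Coquelicot Require Import Coquelicot.
Open Scope R_scope.

(* Classical solution on [0, +oo) of the system:
   each component is right-continuous at 0 and differentiable at every t > 0
   with the prescribed derivative.  Here mu_i = rho_i + mu_i' (i = 1,2,3). *)
Definition is_solution
  (b K a1 a2 a3 be1 be2 g1 g2 e1 e2 r1 r2 r3 m0 m1' m2' m3' m4' : R)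
  (S I1 I2 I12 Rc : R -> R) : Prop :=
  let m1 := r1 + m1' in
  let m2 := r2 + m2' in
  let m3 := r3 + m3' in
  let N := fun t => S t + I1 t + I2 t + I12 t + Rc t in
  filterlim S (at_right 0) (locally (S 0)) /\
  filterlim I1 (at_right 0) (locally (I1 0)) /\
  filterlim I2 (at_right 0) (locally (I2 0)) /\
  filterlim I12 (at_right 0) (locally (I12 0)) /\
  filterlim Rc (at_right 0) (locally (Rc 0)) /\
  forall t, 0 < t ->
    is_derive S t
      ((b * (1 - N t / K) - a1 * I1 t - a2 * I2 t
        - (be1 + be2 + a3) * I12 t - m0) * S t) /\
    is_derive I1 t
      ((b * (1 - N t / K) + a1 * S t - e1 * I12 t - g1 * I2 t - m1) * I1 t
       + be1 * S t * I12 t) /\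
    is_derive I2 t
      ((b * (1 - N t / K) + a2 * S t - e2 * I12 t - g2 * I1 t - m2) * I2 t
       + be2 * S t * I12 t) /\
    is_derive I12 t
      ((b * (1 - N t / K) + a3 * S t + e1 * I1 t + e2 * I2 t - m3) * I12 t
       + (g1 + g2) * I1 t * I2 t) /\
    is_derive Rc t
      ((b * (1 - N t / K) - m4') * Rc t + r1 * I1 t + r2 * I2 t + r3 * I12 t).

(* Solutions stay nonnegative because the system is quasi-positive: the squared negative
   parts of the five components obey a linear differential inequality and vanish at 0, so by
   Gronwall they vanish for all time.  The total population then satisfies
   N' = (b/K) (S** - N) N - P with P >= 0 a weighted sum of the non-susceptible classes, so N
   stays away from 0 and eventually N <= S** + d with S** + d below the threshold.  In that
   regime the threshold turns the equation of the non-susceptible fraction x = 1 - S/N into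
   x' <= - c x (1 - x), hence N - S -> 0.  Finally the square of N - S** decays linearly up to
   a forcing term controlled by P <= C (N - S), which vanishes, so N and S tend to S**. *)

From Stdlib Require Import Reals Lra Psatz.
From Coquelicot Require Import Coquelicot.
Open Scope R_scope.

Local Notation at_top := (Rbar_locally p_infty).

(** * Differential inequalities *)

Lemma is_derive_Rplus (f g : R -> R) x df dg :
  is_derive f x df -> is_derive g x dg -> is_derive (fun t => f t + g t) x (df + dg).
Proof. intros; now apply (is_derive_plus f g). Qed.

Lemma is_derive_Rminus (f g : R -> R) x df dg :
  is_derive f x df -> is_derive g x dg -> is_derive (fun t => f t - g t) x (df - dg).
Proof. intros; now apply (is_derive_minus f g). Qed.

Lemma is_derive_Rconst (c x : R) : is_derive (fun _ : R => c) x 0.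
Proof. apply (@is_derive_const R_AbsRing R_NormedModule). Qed.

Lemma is_derive_exp_scal C x : is_derive (fun t => exp (C * t)) x (C * exp (C * x)).
Proof. auto_derive; [easy | ring]. Qed.

Lemma continuity_pt_of_is_derive (f : R -> R) x l : is_derive f x l -> continuity_pt f x.
Proof. intros H; apply continuity_pt_filterlim, (ex_derive_continuous f); now exists l. Qed.

Lemma is_derive_mul_exp (f : R -> R) t df C :
  is_derive f t df ->
  is_derive (fun u => f u * exp (C * u)) t ((df + C * f t) * exp (C * t)).
Proof.
  intros Hf; auto_derive; [now exists df|].
  replace (Derive (fun u => f u) t) with df by (symmetry; now apply is_derive_unique).
  ring.
Qed.

Lemma is_derive_sq_sub (f : R -> R) t l c :
  is_derive f t l -> is_derive (fun u => (f u - c) * (f u - c)) t (2 * (f t - c) * l).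
Proof.
  intros Hf; auto_derive; [repeat split; now exists l|].
  replace (Derive (fun u => f u) t) with l by (symmetry; now apply is_derive_unique); ring.
Qed.

Lemma derive_nonpos_le (f df : R -> R) a b :
  a <= b -> continuity_pt f a ->
  (forall t, a < t <= b -> is_derive f t (df t)) ->
  (forall t, a < t < b -> df t <= 0) -> f b <= f a.
Proof.
  intros Hab Ha Hd Hneg.
  destruct (Req_dec a b) as [->|Hne]; [lra|].
  assert (pr : forall c, a < c < b -> derivable_pt f c).
  { intros c Hc; exists (df c); apply is_derive_Reals, Hd; lra. }
  destruct (MVT f id a b pr (fun c _ => derivable_pt_id c)) as (c & Hc & E); [lra| | |].
  - intros t Ht; destruct (Req_dec t a) as [->|]; [easy|].
    apply (continuity_pt_of_is_derive f t (df t)), Hd; lra.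
  - intros t _; apply derivable_continuous_pt, derivable_pt_id.
  - rewrite derive_pt_id in E; unfold id in E.
    replace (derive_pt f c (pr c Hc)) with (df c) in E.
    + specialize (Hneg c Hc); nra.
    + destruct (pr c Hc) as [l Hl]; simpl.
      apply (uniqueness_limite f c); [apply is_derive_Reals, Hd; lra | exact Hl].
Qed.

Lemma gronwall_bound (F dF : R -> R) L T :
  continuity_pt F 0 ->
  (forall t, 0 < t <= T -> is_derive F t (dF t)) ->
  (forall t, 0 < t <= T -> dF t <= L * F t) ->
  forall t, 0 <= t <= T -> F t <= F 0 * exp (L * t).
Proof.
  intros HF0 Hd Hle t Ht.
  assert (H : F t * exp (- L * t) <= F 0 * exp (- L * 0)).
  { apply (derive_nonpos_le (fun u => F u * exp (- L * u))
             (fun u => (dF u + - L * F u) * exp (- L * u))); [lra| | |].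
    - apply continuity_pt_mult; [easy|].
      eapply continuity_pt_of_is_derive, is_derive_exp_scal.
    - intros u Hu; apply is_derive_mul_exp, Hd; lra.
    - intros u Hu. specialize (Hle u ltac:(lra)). pose proof (exp_pos (- L * u)). nra. }
  rewrite Rmult_0_r, exp_0, Rmult_1_r in H.
  replace (F t) with (F t * exp (- L * t) * exp (L * t))
    by (rewrite Rmult_assoc, <- exp_plus; replace (- L * t + L * t) with 0 by ring;
        rewrite exp_0; ring).
  apply Rmult_le_compat_r; [apply Rlt_le, exp_pos | exact H].
Qed.

Lemma linear_decay_bound (F dF : R -> R) a al be :
  0 < al -> (forall t, a <= t -> is_derive F t (dF t)) ->
  (forall t, a <= t -> dF t <= - al * F t + be) ->
  forall t, a <= t -> F t <= be / al + (F a - be / al) * exp (- al * (t - a)).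
Proof.
  intros Hal Hd Hle t Ht.
  assert (HG : (F t - be / al) * exp (al * t) <= (F a - be / al) * exp (al * a)).
  { assert (Hd' : forall u, a <= u -> is_derive (fun v => (F v - be / al) * exp (al * v)) u
                  ((dF u - 0 + al * (F u - be / al)) * exp (al * u))).
    { intros u Hu; apply (is_derive_mul_exp (fun v => F v - be / al)).
      apply is_derive_Rminus; [apply Hd; lra | apply is_derive_Rconst]. }
    apply (derive_nonpos_le (fun v => (F v - be / al) * exp (al * v))
             (fun u => (dF u - 0 + al * (F u - be / al)) * exp (al * u)));
      [lra | eapply continuity_pt_of_is_derive, Hd'; lra | intros u Hu; apply Hd'; lra |].
    intros u Hu; specialize (Hle u ltac:(lra)); pose proof (exp_pos (al * u)).
    assert (al * (F u - be / al) = al * F u - be) by (field; lra); nra. }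
  replace (exp (al * a)) with (exp (al * t) * exp (- al * (t - a))) in HG
    by (rewrite <- exp_plus; f_equal; ring).
  pose proof (exp_pos (al * t)). nra.
Qed.

Lemma exp_decay_eventually_le A al eps :
  0 < al -> 0 < eps -> at_top (fun t => A * exp (- al * t) <= eps).
Proof.
  intros Hal Heps.
  assert (Hlim : is_lim (fun t => A * exp (- al * t)) p_infty 0).
  { replace (Finite 0) with (Rbar_mult A 0) by (simpl; now rewrite Rmult_0_r).
    apply is_lim_scal_l.
    apply (is_lim_comp exp (fun t => - al * t) p_infty 0 m_infty).
    - apply is_lim_exp_m.
    - replace m_infty with (Rbar_mult (- al) p_infty)
        by (simpl; destruct (Rle_dec 0 (- al)); [exfalso; lra | easy]).
      apply is_lim_scal_l, is_lim_id.
    - exists 0; intros; discriminate. }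
  apply is_lim_spec in Hlim. destruct (Hlim (mkposreal eps Heps)) as [M HM].
  exists M; intros t Ht; specialize (HM t Ht); simpl in HM.
  apply Rabs_lt_between in HM; lra.
Qed.

Lemma eventually_le_of_linear_decay (F dF : R -> R) al be :
  0 < al -> at_top (fun t => is_derive F t (dF t) /\ dF t <= - al * F t + be) ->
  forall eps, 0 < eps -> at_top (fun t => F t <= be / al + eps).
Proof.
  intros Hal [M HM] eps Heps.
  assert (Hbound := linear_decay_bound F dF (M + 1) al be Hal
    (fun t Ht => proj1 (HM t ltac:(lra))) (fun t Ht => proj2 (HM t ltac:(lra)))).
  destruct (exp_decay_eventually_le ((F (M + 1) - be / al) * exp (al * (M + 1))) al eps Hal Heps)
    as [M' HM'].
  exists (Rmax (M + 1) M'); intros t Ht.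
  pose proof (Rmax_l (M + 1) M'); pose proof (Rmax_r (M + 1) M').
  specialize (Hbound t ltac:(lra)); specialize (HM' t ltac:(lra)).
  replace (exp (- al * (t - (M + 1)))) with (exp (al * (M + 1)) * exp (- al * t)) in Hbound
    by (rewrite <- exp_plus; f_equal; ring).
  lra.
Qed.

Lemma eventually_le_of_vanishing_forcing (F dF : R -> R) al :
  0 < al ->
  (forall eta, 0 < eta -> at_top (fun t => is_derive F t (dF t) /\ dF t <= - al * F t + eta)) ->
  forall eps, 0 < eps -> at_top (fun t => F t <= eps).
Proof.
  intros Hal HF eps Heps.
  generalize (eventually_le_of_linear_decay F dF al (al * eps / 2)
           Hal (HF (al * eps / 2) ltac:(nra)) (eps / 2) ltac:(lra)).
  apply filter_imp; intros t Ht.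
  replace (al * eps / 2 / al) with (eps / 2) in Ht by (field; lra); lra.
Qed.

Lemma is_lim_of_eventually_abs_le (f : R -> R) l :
  (forall eps, 0 < eps -> at_top (fun t => Rabs (f t - l) <= eps)) -> is_lim f p_infty l.
Proof.
  intros Hf; apply is_lim_spec; intros eps.
  pose proof (cond_pos eps).
  generalize (Hf (eps / 2) ltac:(lra)); apply filter_imp; intros t Ht; lra.
Qed.

(** * Negative parts *)

Definition negpart (y : R) := Rmin y 0.
Definition negpart_sq (y : R) := negpart y * negpart y.

Lemma negpart_le0 y : negpart y <= 0.
Proof. apply Rmin_r. Qed.

Lemma negpart_mul_self y : negpart y * y = negpart_sq y.
Proof. unfold negpart_sq, negpart, Rmin; destruct Rle_dec; ring. Qed.

Lemma negpart_mul_le y z : negpart y * z <= negpart y * negpart z.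
Proof. unfold negpart, Rmin; do 2 destruct Rle_dec; nra. Qed.

Lemma negpart_mul_prod_le y z w M :
  Rabs z <= M -> Rabs w <= M ->
  negpart y * (z * w) <= M * (negpart y * negpart z + negpart y * negpart w).
Proof.
  intros Hz%Rabs_le_between Hw%Rabs_le_between.
  assert (M * (negpart z + negpart w) <= z * w)
    by (unfold negpart, Rmin; do 2 destruct Rle_dec; nra).
  pose proof (negpart_le0 y); nra.
Qed.

Lemma negpart_cross_le y z P :
  negpart_sq y <= P -> negpart_sq z <= P -> negpart y * negpart z <= P.
Proof.
  unfold negpart_sq; intros Hy Hz.
  pose proof (negpart_le0 y); pose proof (negpart_le0 z); nra.
Qed.

Lemma negpart_sq_nonneg y : 0 <= negpart_sq y.
Proof. apply Rle_0_sqr. Qed.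

Lemma negpart_sq_of_nonneg y : 0 <= y -> negpart_sq y = 0.
Proof. intros; unfold negpart_sq, negpart; rewrite Rmin_right by lra; ring. Qed.

Lemma ge_of_negpart_sq_le y d : 0 <= d -> negpart_sq y <= d * d -> - d <= y.
Proof. unfold negpart_sq, negpart, Rmin; intros; destruct Rle_dec; nra. Qed.

Lemma is_derive_negpart_sq y : is_derive negpart_sq y (2 * negpart y).
Proof.
  apply is_derive_Reals; intros eps Heps.
  exists (mkposreal eps Heps); intros h Hh Hl; simpl in Hl.
  assert (Herr : Rabs (negpart_sq (y + h) - negpart_sq y - 2 * negpart y * h) <= h * h).
  { unfold negpart_sq, negpart, Rmin.
    destruct (Rle_dec (y + h) 0), (Rle_dec y 0); apply Rabs_le; split; nra. }
  replace ((negpart_sq (y + h) - negpart_sq y) / h - 2 * negpart y)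
    with ((negpart_sq (y + h) - negpart_sq y - 2 * negpart y * h) / h) by (field; auto).
  assert (0 < Rabs h) by now apply Rabs_pos_lt.
  rewrite Rabs_div by auto.
  apply (Rmult_lt_reg_r (Rabs h)); auto.
  unfold Rdiv; rewrite Rmult_assoc, Rinv_l, Rmult_1_r by lra.
  assert (h * h = Rabs h * Rabs h) by (rewrite <- Rabs_mult, Rabs_right; nra).
  nra.
Qed.

Lemma is_derive_negpart_sq_comp (f : R -> R) t l :
  is_derive f t l -> is_derive (fun u => negpart_sq (f u)) t (2 * negpart (f t) * l).
Proof.
  intros Hf; replace (2 * negpart (f t) * l) with (scal l (2 * negpart (f t)))
    by (unfold scal; simpl; unfold mult; simpl; ring).
  apply (is_derive_comp negpart_sq f); [apply is_derive_negpart_sq | exact Hf].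
Qed.

Lemma is_derive_negpart_sq_affine (f : R -> R) t l c k :
  is_derive f t l ->
  is_derive (fun u => negpart_sq (c + k * f u)) t (2 * negpart (c + k * f t) * (k * l)).
Proof.
  intros Hf; apply (is_derive_negpart_sq_comp (fun u => c + k * f u)).
  auto_derive; [now exists l|].
  replace (Derive (fun u => f u) t) with l by (symmetry; now apply is_derive_unique); ring.
Qed.

Lemma continuity_pt_negpart_sq_comp (f : R -> R) t :
  continuity_pt f t -> continuity_pt (fun u => negpart_sq (f u)) t.
Proof.
  intros Hf; apply (continuity_pt_comp f negpart_sq); [easy|].
  eapply continuity_pt_of_is_derive, is_derive_negpart_sq.
Qed.

Lemma barrier_lower_bound (F dF : R -> R) a L :
  (forall t, a <= t -> is_derive F t (dF t)) ->
  (forall t, a <= t -> F t <= L -> 0 <= dF t) ->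
  forall t, a <= t -> Rmin (F a) L <= F t.
Proof.
  intros Hd Hbar t Ht.
  pose proof (Rmin_l (F a) L); pose proof (Rmin_r (F a) L).
  set (l := Rmin (F a) L) in *.
  assert (Hmono : negpart_sq (- l + 1 * F t) <= negpart_sq (- l + 1 * F a)).
  { apply (derive_nonpos_le (fun u => negpart_sq (- l + 1 * F u))
             (fun u => 2 * negpart (- l + 1 * F u) * (1 * dF u))); [lra | | |].
    - eapply continuity_pt_of_is_derive, is_derive_negpart_sq_affine, Hd; lra.
    - intros u Hu; apply is_derive_negpart_sq_affine, Hd; lra.
    - intros u Hu; unfold negpart, Rmin at 1; destruct Rle_dec; [|lra].
      specialize (Hbar u ltac:(lra) ltac:(lra)); nra. }
  rewrite (negpart_sq_of_nonneg (- l + 1 * F a)) in Hmono by lra.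
  unfold negpart_sq, negpart, Rmin in Hmono; destruct Rle_dec; nra.
Qed.

Lemma eventually_le_of_logistic (F dF : R -> R) k s :
  0 < k -> 0 < s ->
  at_top (fun t => is_derive F t (dF t) /\ dF t <= k * (s - F t) * F t) ->
  forall eps, 0 < eps -> at_top (fun t => F t <= s + eps).
Proof.
  intros Hk Hs HF eps Heps.
  (* the squared excess of [F] over [s] decays exponentially *)
  assert (HG : at_top (fun t =>
    is_derive (fun u => negpart_sq (s + -1 * F u)) t (2 * negpart (s + -1 * F t) * (-1 * dF t))
    /\ 2 * negpart (s + -1 * F t) * (-1 * dF t) <= - (2 * k * s) * negpart_sq (s + -1 * F t) + 0)).
  { revert HF; apply filter_imp; intros t [Hd Hle]; split; [now apply is_derive_negpart_sq_affine|].
    unfold negpart_sq, negpart, Rmin; destruct Rle_dec; [|lra].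
    assert (0 <= - (s - F t) * (k * (s - F t) * F t - dF t)) by nra.
    assert (0 <= k * ((s - F t) * (s - F t)) * (F t - s)) by
      (apply Rmult_le_pos; [apply Rmult_le_pos; [lra | apply Rle_0_sqr] | lra]).
    nra. }
  generalize (eventually_le_of_linear_decay _ _ (2 * k * s) 0 ltac:(nra) HG (eps * eps) ltac:(nra)).
  apply filter_imp; intros t Ht.
  unfold Rdiv in Ht; rewrite Rmult_0_l, Rplus_0_l in Ht.
  apply ge_of_negpart_sq_le in Ht; lra.
Qed.

Lemma eventually_le_of_logistic_decay (x dx : R -> R) c :
  0 < c ->
  at_top (fun t => is_derive x t (dx t) /\ dx t <= - c * (1 - x t) * x t /\ 0 <= x t < 1) ->
  forall eps, 0 < eps -> at_top (fun t => x t <= eps).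
Proof.
  intros Hc [M HM] eps Heps.
  set (a := M + 1).
  assert (Hdecr : forall t, a <= t -> x t <= x a).
  { intros t Ht; apply (derive_nonpos_le x dx a t Ht).
    - eapply continuity_pt_of_is_derive, (HM a); unfold a; lra.
    - intros u Hu; apply HM; unfold a in *; lra.
    - intros u Hu; destruct (HM u ltac:(unfold a in *; lra)) as (_ & Hle & Hx).
      assert (0 <= c * ((1 - x u) * x u)) by (apply Rmult_le_pos; nra); lra. }
  destruct (HM a ltac:(unfold a; lra)) as (_ & _ & Hxa).
  assert (HG : at_top (fun t => is_derive x t (dx t) /\ dx t <= - (c * (1 - x a)) * x t + 0)).
  { exists a; intros t Ht; destruct (HM t ltac:(unfold a in *; lra)) as (Hd & Hle & Hx).
    split; [easy|]. specialize (Hdecr t ltac:(lra)).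
    assert (c * (1 - x a) * x t <= c * (1 - x t) * x t)
      by (apply Rmult_le_compat_r; [lra | apply Rmult_le_compat_l; lra]); lra. }
  assert (0 < c * (1 - x a)) by nra.
  generalize (eventually_le_of_linear_decay _ _ _ 0 ltac:(eassumption) HG eps Heps).
  apply filter_imp; intros t Ht; unfold Rdiv in Ht; rewrite Rmult_0_l in Ht; lra.
Qed.

(** * Positivity of quasi-positive systems *)

(* Freezing [f] at its value at 0 on the left turns right-continuity at 0 into continuity,
   so that the two-sided continuity lemmas of the standard library apply. *)
Definition ext_left (f : R -> R) t := f (Rmax t 0).

Lemma ext_left_eq f t : 0 <= t -> ext_left f t = f t.
Proof. intros; unfold ext_left; now rewrite Rmax_left. Qed.

Lemma continuity_pt_ext_left_0 (f : R -> R) :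
  filterlim f (at_right 0) (locally (f 0)) -> continuity_pt (ext_left f) 0.
Proof.
  intros Hf eps Heps.
  destruct (Hf (fun y => Rabs (y - f 0) < eps)) as [del Hdel].
  { exists (mkposreal eps Heps); now intros y Hy. }
  exists del; split; [apply cond_pos|].
  intros x [_ Hx]; simpl in *; unfold R_dist, ext_left in *.
  rewrite (Rmax_right 0 0), Rminus_0_r in * by lra.
  destruct (Rle_dec x 0).
  - rewrite Rmax_right, Rminus_diag, Rabs_R0 by lra; lra.
  - rewrite Rmax_left by lra; apply Hdel; [|lra].
    change (Rabs (x - 0) < del); now rewrite Rminus_0_r.
Qed.

Lemma is_derive_ext_left (f : R -> R) t l :
  0 < t -> is_derive f t l -> is_derive (ext_left f) t l.
Proof.
  intros Ht Hf; apply (is_derive_ext_loc f); auto.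
  exists (mkposreal t Ht); intros u Hu.
  change (Rabs (u - t) < t) in Hu; apply Rabs_lt_between in Hu.
  symmetry; apply ext_left_eq; lra.
Qed.

Lemma continuity_pt_ext_left (f : R -> R) t :
  filterlim f (at_right 0) (locally (f 0)) -> (forall u, 0 < u -> ex_derive f u) ->
  0 <= t -> continuity_pt (ext_left f) t.
Proof.
  intros H0 Hd Ht; destruct (Req_dec t 0) as [->|]; [now apply continuity_pt_ext_left_0|].
  destruct (Hd t) as [l Hl]; [lra|].
  eapply continuity_pt_of_is_derive, is_derive_ext_left; eauto; lra.
Qed.

Lemma is_derive_negpart_sq_ext_left (f : R -> R) t l :
  0 < t -> is_derive f t l ->
  is_derive (fun u => negpart_sq (ext_left f u)) t (2 * negpart (f t) * l).
Proof.
  intros Ht Hf; rewrite <- (ext_left_eq f t) by lra.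
  now apply is_derive_negpart_sq_comp, is_derive_ext_left.
Qed.

Definition bounded_on_compacts (f : R -> R) :=
  forall T, 0 <= T -> exists C, forall t, 0 <= t <= T -> Rabs (f t) <= C.

Lemma bounded_on_compacts_of_continuous (f : R -> R) :
  filterlim f (at_right 0) (locally (f 0)) -> (forall u, 0 < u -> ex_derive f u) ->
  bounded_on_compacts f.
Proof.
  intros H0 Hd T HT.
  destruct (continuity_ab_maj (fun t => Rabs (ext_left f t)) 0 T HT) as [a [Ha _]].
  { intros; apply continuity_pt_comp with (f2 := Rabs);
      [apply continuity_pt_ext_left; auto; lra | apply Rcontinuity_abs]. }
  exists (Rabs (ext_left f a)); intros t Ht.
  rewrite <- (ext_left_eq f t) by lra; now apply Ha.
Qed.

Lemma bounded_on_compacts_const c : bounded_on_compacts (fun _ => c).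
Proof. intros T _; exists (Rabs c); intros; lra. Qed.

Lemma bounded_on_compacts_plus (f g : R -> R) :
  bounded_on_compacts f -> bounded_on_compacts g -> bounded_on_compacts (fun t => f t + g t).
Proof.
  intros Hf Hg T HT; destruct (Hf T HT) as [C HC], (Hg T HT) as [D HD].
  exists (C + D); intros t Ht.
  eapply Rle_trans; [apply Rabs_triang | now apply Rplus_le_compat; auto].
Qed.

Lemma bounded_on_compacts_minus (f g : R -> R) :
  bounded_on_compacts f -> bounded_on_compacts g -> bounded_on_compacts (fun t => f t - g t).
Proof.
  intros Hf Hg T HT; destruct (Hf T HT) as [C HC], (Hg T HT) as [D HD].
  exists (C + D); intros t Ht.
  eapply Rle_trans; [apply Rabs_triang | rewrite Rabs_Ropp; now apply Rplus_le_compat; auto].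
Qed.

Lemma bounded_on_compacts_mult (f g : R -> R) :
  bounded_on_compacts f -> bounded_on_compacts g -> bounded_on_compacts (fun t => f t * g t).
Proof.
  intros Hf Hg T HT; destruct (Hf T HT) as [C HC], (Hg T HT) as [D HD].
  exists (C * D); intros t Ht; rewrite Rabs_mult.
  apply Rmult_le_compat; auto using Rabs_pos.
Qed.

Lemma bounded_on_compacts_abs (f : R -> R) :
  bounded_on_compacts f -> bounded_on_compacts (fun t => Rabs (f t)).
Proof.
  intros Hf T HT; destruct (Hf T HT) as [C HC].
  exists C; intros; rewrite Rabs_Rabsolu; auto.
Qed.

Lemma negpart_energy_le (s x1 x2 x3 x4 gS A1 A2 A3 A4 be1 be2 g r1 r2 r3 C M : R) :
  0 <= be1 -> 0 <= be2 -> 0 <= g -> 0 <= r1 -> 0 <= r2 -> 0 <= r3 ->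
  Rabs gS <= C -> Rabs A1 <= C -> Rabs A2 <= C -> Rabs A3 <= C -> Rabs A4 <= C ->
  Rabs s <= M -> Rabs x1 <= M -> Rabs x2 <= M -> Rabs x3 <= M ->
  2 * negpart s * (gS * s) + 2 * negpart x1 * (A1 * x1 + be1 * s * x3)
  + 2 * negpart x2 * (A2 * x2 + be2 * s * x3) + 2 * negpart x3 * (A3 * x3 + g * x1 * x2)
  + 2 * negpart x4 * (A4 * x4 + r1 * x1 + r2 * x2 + r3 * x3)
  <= 2 * (C + 2 * M * (be1 + be2 + g) + r1 + r2 + r3)
       * (negpart_sq s + negpart_sq x1 + negpart_sq x2 + negpart_sq x3 + negpart_sq x4).
Proof.
  intros Hbe1 Hbe2 Hg Hr1 Hr2 Hr3 HgS HA1 HA2 HA3 HA4 Hs H1 H2 H3.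
  assert (HM : 0 <= M) by (pose proof (Rabs_pos s); lra).
  set (P := negpart_sq s + negpart_sq x1 + negpart_sq x2 + negpart_sq x3 + negpart_sq x4).
  pose proof (negpart_sq_nonneg s); pose proof (negpart_sq_nonneg x1);
    pose proof (negpart_sq_nonneg x2); pose proof (negpart_sq_nonneg x3);
    pose proof (negpart_sq_nonneg x4).
  assert (Hlin : gS * negpart_sq s + A1 * negpart_sq x1 + A2 * negpart_sq x2
                 + A3 * negpart_sq x3 + A4 * negpart_sq x4 <= C * P).
  { apply Rabs_le_between in HgS, HA1, HA2, HA3, HA4; unfold P; nra. }
  assert (Hbe1S : be1 * (negpart x1 * (s * x3)) <= be1 * (M * (P + P))).
  { apply Rmult_le_compat_l; [lra|].
    eapply Rle_trans; [apply negpart_mul_prod_le; eassumption|].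
    apply Rmult_le_compat_l; [lra|].
    apply Rplus_le_compat; apply negpart_cross_le; unfold P; lra. }
  assert (Hbe2S : be2 * (negpart x2 * (s * x3)) <= be2 * (M * (P + P))).
  { apply Rmult_le_compat_l; [lra|].
    eapply Rle_trans; [apply negpart_mul_prod_le; eassumption|].
    apply Rmult_le_compat_l; [lra|].
    apply Rplus_le_compat; apply negpart_cross_le; unfold P; lra. }
  assert (HgI : g * (negpart x3 * (x1 * x2)) <= g * (M * (P + P))).
  { apply Rmult_le_compat_l; [lra|].
    eapply Rle_trans; [apply negpart_mul_prod_le; eassumption|].
    apply Rmult_le_compat_l; [lra|].
    apply Rplus_le_compat; apply negpart_cross_le; unfold P; lra. }
  assert (Hr : forall r y, 0 <= r -> negpart_sq y <= P -> r * (negpart x4 * y) <= r * P).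
  { intros r y Hr0 Hy; apply Rmult_le_compat_l; [lra|].
    eapply Rle_trans; [apply negpart_mul_le | apply negpart_cross_le; [unfold P; lra | exact Hy]]. }
  pose proof (Hr r1 x1 Hr1 ltac:(unfold P; lra)); pose proof (Hr r2 x2 Hr2 ltac:(unfold P; lra));
    pose proof (Hr r3 x3 Hr3 ltac:(unfold P; lra)).
  pose proof (negpart_mul_self s); pose proof (negpart_mul_self x1);
    pose proof (negpart_mul_self x2); pose proof (negpart_mul_self x3);
    pose proof (negpart_mul_self x4).
  unfold P in *; nra.
Qed.

Section QuasipositiveSystem.

Variables S I1 I2 I12 Rc gS A1 A2 A3 A4 : R -> R.
Variables be1 be2 g r1 r2 r3 : R.
Hypotheses (Hbe1 : 0 <= be1) (Hbe2 : 0 <= be2) (Hg : 0 <= g)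
  (Hr1 : 0 <= r1) (Hr2 : 0 <= r2) (Hr3 : 0 <= r3).
Hypotheses (HScont : filterlim S (at_right 0) (locally (S 0)))
  (HI1cont : filterlim I1 (at_right 0) (locally (I1 0)))
  (HI2cont : filterlim I2 (at_right 0) (locally (I2 0)))
  (HI12cont : filterlim I12 (at_right 0) (locally (I12 0)))
  (HRccont : filterlim Rc (at_right 0) (locally (Rc 0))).
Hypotheses
  (HdS : forall t, 0 < t -> is_derive S t (gS t * S t))
  (HdI1 : forall t, 0 < t -> is_derive I1 t (A1 t * I1 t + be1 * S t * I12 t))
  (HdI2 : forall t, 0 < t -> is_derive I2 t (A2 t * I2 t + be2 * S t * I12 t))
  (HdI12 : forall t, 0 < t -> is_derive I12 t (A3 t * I12 t + g * I1 t * I2 t))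
  (HdRc : forall t, 0 < t -> is_derive Rc t (A4 t * Rc t + r1 * I1 t + r2 * I2 t + r3 * I12 t)).
Hypotheses (HgS : bounded_on_compacts gS) (HA1 : bounded_on_compacts A1)
  (HA2 : bounded_on_compacts A2) (HA3 : bounded_on_compacts A3) (HA4 : bounded_on_compacts A4).

Lemma quasipositive_nonneg :
  0 <= S 0 -> 0 <= I1 0 -> 0 <= I2 0 -> 0 <= I12 0 -> 0 <= Rc 0 ->
  forall t, 0 <= t -> 0 <= S t /\ 0 <= I1 t /\ 0 <= I2 t /\ 0 <= I12 t /\ 0 <= Rc t.
Proof.
  intros HS HI1 HI2 HI12 HRc T HT.
  assert (HC : bounded_on_compacts
    (fun t => Rabs (gS t) + Rabs (A1 t) + Rabs (A2 t) + Rabs (A3 t) + Rabs (A4 t)))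
    by (repeat apply bounded_on_compacts_plus; now apply bounded_on_compacts_abs).
  assert (HM : bounded_on_compacts
    (fun t => Rabs (S t) + Rabs (I1 t) + Rabs (I2 t) + Rabs (I12 t))).
  { repeat apply bounded_on_compacts_plus; apply bounded_on_compacts_abs;
      apply bounded_on_compacts_of_continuous; auto; intros u Hu; eexists; eauto. }
  destruct (HC T HT) as [C HCb], (HM T HT) as [M HMb].
  set (phi u := negpart_sq (ext_left S u) + negpart_sq (ext_left I1 u) + negpart_sq (ext_left I2 u)
                + negpart_sq (ext_left I12 u) + negpart_sq (ext_left Rc u)).
  assert (Hphi : phi T <= phi 0 * exp (2 * (C + 2 * M * (be1 + be2 + g) + r1 + r2 + r3) * T)).
  { apply (gronwall_bound phi (fun u =>
      2 * negpart (S u) * (gS u * S u) + 2 * negpart (I1 u) * (A1 u * I1 u + be1 * S u * I12 u)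
      + 2 * negpart (I2 u) * (A2 u * I2 u + be2 * S u * I12 u)
      + 2 * negpart (I12 u) * (A3 u * I12 u + g * I1 u * I2 u)
      + 2 * negpart (Rc u) * (A4 u * Rc u + r1 * I1 u + r2 * I2 u + r3 * I12 u))
      _ T); [| | | lra].
    - unfold phi; repeat apply continuity_pt_plus; apply continuity_pt_negpart_sq_comp,
        continuity_pt_ext_left; auto; try lra; intros u Hu; eexists; eauto.
    - intros u Hu; assert (0 < u) by lra; unfold phi.
      repeat apply is_derive_Rplus; (apply is_derive_negpart_sq_ext_left; [lra | auto]).
    - intros u Hu; specialize (HCb u ltac:(lra)); specialize (HMb u ltac:(lra)).
      unfold phi; rewrite !ext_left_eq by lra.
      pose proof (Rabs_pos (gS u)); pose proof (Rabs_pos (A1 u)); pose proof (Rabs_pos (A2 u));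
        pose proof (Rabs_pos (A3 u)); pose proof (Rabs_pos (A4 u)); pose proof (Rabs_pos (S u));
        pose proof (Rabs_pos (I1 u)); pose proof (Rabs_pos (I2 u)); pose proof (Rabs_pos (I12 u)).
      rewrite Rabs_right in HCb, HMb by lra.
      apply negpart_energy_le; auto; lra. }
  assert (Hphi0 : phi 0 = 0) by (unfold phi; rewrite !ext_left_eq, !negpart_sq_of_nonneg; lra).
  rewrite Hphi0, Rmult_0_l in Hphi; unfold phi in Hphi; rewrite !ext_left_eq in Hphi by lra.
  pose proof (negpart_sq_nonneg (S T)); pose proof (negpart_sq_nonneg (I1 T));
    pose proof (negpart_sq_nonneg (I2 T)); pose proof (negpart_sq_nonneg (I12 T));
    pose proof (negpart_sq_nonneg (Rc T)).
  repeat split; rewrite <- Ropp_0; apply ge_of_negpart_sq_le; lra.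
Qed.

Lemma quasipositive_pos :
  0 < S 0 -> 0 <= I1 0 -> 0 <= I2 0 -> 0 <= I12 0 -> 0 <= Rc 0 ->
  forall t, 0 <= t -> 0 < S t /\ 0 <= I1 t /\ 0 <= I2 t /\ 0 <= I12 t /\ 0 <= Rc t.
Proof.
  intros HS HI1 HI2 HI12 HRc T HT.
  assert (Hnn := quasipositive_nonneg ltac:(lra) HI1 HI2 HI12 HRc).
  destruct (HgS T HT) as [C HC].
  assert (H : - ext_left S T <= - ext_left S 0 * exp (- C * T)).
  { apply (gronwall_bound (fun u => - ext_left S u) (fun u => - (gS u * S u)) _ T); [| | | lra].
    - apply continuity_pt_opp, continuity_pt_ext_left_0, HScont.
    - intros u Hu; apply (is_derive_opp (ext_left S)), is_derive_ext_left; [lra | apply HdS; lra].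
    - intros u Hu; rewrite ext_left_eq by lra.
      specialize (HC u ltac:(lra)); apply Rabs_le_between in HC.
      destruct (Hnn u ltac:(lra)) as [HSu _]; nra. }
  rewrite !ext_left_eq in H by lra; pose proof (exp_pos (- C * T)).
  split; [nra | apply Hnn; lra].
Qed.

End QuasipositiveSystem.

(** * The total population *)

Section TotalPopulation.

Variables b K a1 a2 ah m0 m1 m2 m3 m4 : R.
Variables S I1 I2 I12 Rc N : R -> R.
Hypotheses (Hb : 0 < b) (HK : 0 < K) (Ha1 : 0 < a1) (Ha2 : 0 < a2) (Hah : 0 < ah).
Hypotheses (Hm0b : m0 < b) (Hm04 : m0 < m4) (Hm41 : m4 < m1) (Hm42 : m4 < m2) (Hm43 : m4 < m3)
  (Hm1b : m1 < b) (Hm2b : m2 < b) (Hm3b : m3 < b).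

Local Notation Sstar := (K / b * (b - m0)).
Local Notation excess_mortality t :=
  ((m1 - m0) * I1 t + (m2 - m0) * I2 t + (m3 - m0) * I12 t + (m4 - m0) * Rc t).

Hypothesis Hthr : Sstar < Rmin ((m1 - m0) / a1) (Rmin ((m2 - m0) / a2) ((m3 - m0) / ah)).
Hypothesis HN : forall t, N t = S t + I1 t + I2 t + I12 t + Rc t.
Hypothesis Hpos : forall t, 0 <= t ->
  0 < S t /\ 0 <= I1 t /\ 0 <= I2 t /\ 0 <= I12 t /\ 0 <= Rc t.
Hypothesis HdS : forall t, 0 < t ->
  is_derive S t ((b * (1 - N t / K) - a1 * I1 t - a2 * I2 t - ah * I12 t - m0) * S t).
Hypothesis HdN : forall t, 0 < t ->
  is_derive N t (b * (1 - N t / K) * N t - m0 * S t - m1 * I1 t - m2 * I2 t - m3 * I12 t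
                 - m4 * Rc t).

Lemma N_pos t : 0 <= t -> 0 < N t.
Proof. intros Ht; rewrite HN; destruct (Hpos t Ht) as (? & ? & ? & ? & ?); lra. Qed.

Lemma N_growth_eq t :
  b * (1 - N t / K) * N t - m0 * S t - m1 * I1 t - m2 * I2 t - m3 * I12 t - m4 * Rc t
  = b / K * (Sstar - N t) * N t - excess_mortality t.
Proof. rewrite HN; field; lra. Qed.

Lemma excess_mortality_bounds t : 0 <= t ->
  0 <= excess_mortality t <= (m1 + m2 + m3 + m4 - 4 * m0) * (N t - S t).
Proof.
  intros Ht; rewrite HN; destruct (Hpos t Ht) as (? & ? & ? & ? & ?).
  assert (0 <= (m1 - m0) * I1 t) by (apply Rmult_le_pos; lra).
  assert (0 <= (m2 - m0) * I2 t) by (apply Rmult_le_pos; lra).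
  assert (0 <= (m3 - m0) * I12 t) by (apply Rmult_le_pos; lra).
  assert (0 <= (m4 - m0) * Rc t) by (apply Rmult_le_pos; lra).
  split; [lra | nra].
Qed.

Lemma N_lower_bound : exists l, 0 < l /\ forall t, 1 <= t -> l <= N t.
Proof.
  set (mx := Rmax m1 (Rmax m2 m3)).
  assert (Hmx : m1 <= mx /\ m2 <= mx /\ m3 <= mx /\ mx < b).
  { pose proof (Rmax_l m1 (Rmax m2 m3)); pose proof (Rmax_r m1 (Rmax m2 m3)).
    pose proof (Rmax_l m2 m3); pose proof (Rmax_r m2 m3).
    repeat split; try lra; unfold mx; repeat apply Rmax_lub_lt; lra. }
  (* below K (b - mx) / b the logistic growth outweighs every mortality rate *)
  exists (Rmin (N 1) (K * (b - mx) / b)); split.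
  { apply Rmin_pos; [apply N_pos; lra | apply Rdiv_lt_0_compat; nra]. }
  apply barrier_lower_bound with (dF := fun t =>
    b * (1 - N t / K) * N t - m0 * S t - m1 * I1 t - m2 * I2 t - m3 * I12 t - m4 * Rc t).
  - intros t Ht; apply HdN; lra.
  - intros t Ht HNt; destruct (Hpos t ltac:(lra)) as (? & ? & ? & ? & ?).
    assert (Hslack : 0 <= b - mx - b * N t / K).
    { apply (Rmult_le_compat_l (b / K)) in HNt; [|apply Rlt_le, Rdiv_lt_0_compat; lra].
      replace (b / K * (K * (b - mx) / b)) with (b - mx) in HNt by (field; lra).
      unfold Rdiv in *; lra. }
    assert (0 <= N t * (b - mx - b * N t / K)) by (apply Rmult_le_pos; [apply Rlt_le, N_pos|]; lra).
    assert (N t * (b - mx - b * N t / K) = b * (1 - N t / K) * N t - mx * N t) by (field; lra).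
    rewrite HN in *; nra.
Qed.

Lemma N_eventually_le eps : 0 < eps -> at_top (fun t => N t <= Sstar + eps).
Proof.
  apply eventually_le_of_logistic with (dF := fun t =>
    b * (1 - N t / K) * N t - m0 * S t - m1 * I1 t - m2 * I2 t - m3 * I12 t - m4 * Rc t)
    (k := b / K).
  - apply Rdiv_lt_0_compat; lra.
  - apply Rmult_lt_0_compat; [apply Rdiv_lt_0_compat|]; lra.
  - exists 0; intros t Ht; split; [now apply HdN|].
    rewrite N_growth_eq; pose proof (excess_mortality_bounds t ltac:(lra)); lra.
Qed.

Lemma susceptible_fraction_deriv_le c s i1 i2 i3 r n :
  n = s + i1 + i2 + i3 + r ->
  0 < s -> 0 <= i1 -> 0 <= i2 -> 0 <= i3 -> 0 <= r -> 0 <= c ->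
  c <= m1 - m0 - a1 * n -> c <= m2 - m0 - a2 * n -> c <= m3 - m0 - ah * n -> c <= m4 - m0 ->
  0 - ((b * (1 - n / K) - a1 * i1 - a2 * i2 - ah * i3 - m0) * s * n
       - s * (b * (1 - n / K) * n - m0 * s - m1 * i1 - m2 * i2 - m3 * i3 - m4 * r)) / n ^ 2
  <= - c * (1 - (1 - s / n)) * (1 - s / n).
Proof.
  intros -> Hs H1 H2 H3 H4 Hc C1 C2 C3 C4.
  set (n := s + i1 + i2 + i3 + r) in *.
  assert (Hn : 0 < n) by (unfold n; lra).
  set (excess := (m1 - m0 - a1 * n) * i1 + (m2 - m0 - a2 * n) * i2 + (m3 - m0 - ah * n) * i3
                 + (m4 - m0) * r).
  replace ((b * (1 - n / K) - a1 * i1 - a2 * i2 - ah * i3 - m0) * s * n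
           - s * (b * (1 - n / K) * n - m0 * s - m1 * i1 - m2 * i2 - m3 * i3 - m4 * r))
    with (s * excess) by (unfold excess, n; field; lra).
  replace (- c * (1 - (1 - s / n)) * (1 - s / n)) with (0 - s * (c * (n - s)) / n ^ 2)
    by (field; lra).
  assert (c * (n - s) <= excess).
  { unfold excess; replace (n - s) with (i1 + i2 + i3 + r) by (unfold n; ring).
    assert (c * i1 <= (m1 - m0 - a1 * n) * i1) by (apply Rmult_le_compat_r; lra).
    assert (c * i2 <= (m2 - m0 - a2 * n) * i2) by (apply Rmult_le_compat_r; lra).
    assert (c * i3 <= (m3 - m0 - ah * n) * i3) by (apply Rmult_le_compat_r; lra).
    assert (c * r <= (m4 - m0) * r) by (apply Rmult_le_compat_r; lra). lra. }
  unfold Rdiv; apply Rplus_le_compat_l, Ropp_le_contravar, Rmult_le_compat_r;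
    [apply Rlt_le, Rinv_0_lt_compat; nra | apply Rmult_le_compat_l; lra].
Qed.

Lemma threshold_margin : exists d c, 0 < d /\ 0 < c /\ forall n, n <= Sstar + d ->
  c <= m1 - m0 - a1 * n /\ c <= m2 - m0 - a2 * n /\ c <= m3 - m0 - ah * n /\ c <= m4 - m0.
Proof.
  pose proof (Rmin_l ((m1 - m0) / a1) (Rmin ((m2 - m0) / a2) ((m3 - m0) / ah))).
  pose proof (Rmin_r ((m1 - m0) / a1) (Rmin ((m2 - m0) / a2) ((m3 - m0) / ah))).
  pose proof (Rmin_l ((m2 - m0) / a2) ((m3 - m0) / ah)).
  pose proof (Rmin_r ((m2 - m0) / a2) ((m3 - m0) / ah)).
  set (th := Rmin ((m1 - m0) / a1) (Rmin ((m2 - m0) / a2) ((m3 - m0) / ah))) in *.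
  assert (Hth : a1 * th <= m1 - m0 /\ a2 * th <= m2 - m0 /\ ah * th <= m3 - m0).
  { repeat split; [apply (Rmult_le_reg_r (/ a1)) | apply (Rmult_le_reg_r (/ a2))
      | apply (Rmult_le_reg_r (/ ah))]; try (apply Rinv_0_lt_compat; lra);
      rewrite Rmult_comm, <- Rmult_assoc, Rinv_l, Rmult_1_l by lra; unfold Rdiv in *; lra. }
  set (d := (th - Sstar) / 2).
  exists d, (Rmin (Rmin (a1 * d) (a2 * d)) (Rmin (ah * d) (m4 - m0))).
  pose proof (Rmin_l (Rmin (a1 * d) (a2 * d)) (Rmin (ah * d) (m4 - m0))).
  pose proof (Rmin_r (Rmin (a1 * d) (a2 * d)) (Rmin (ah * d) (m4 - m0))).
  pose proof (Rmin_l (a1 * d) (a2 * d)); pose proof (Rmin_r (a1 * d) (a2 * d)).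
  pose proof (Rmin_l (ah * d) (m4 - m0)); pose proof (Rmin_r (ah * d) (m4 - m0)).
  assert (Hd : 0 < d) by (unfold d; lra).
  split; [easy | split; [repeat apply Rmin_pos; try apply Rmult_lt_0_compat; lra|]].
  intros n Hn.
  assert (a1 * n <= a1 * (Sstar + d)) by (apply Rmult_le_compat_l; lra).
  assert (a2 * n <= a2 * (Sstar + d)) by (apply Rmult_le_compat_l; lra).
  assert (ah * n <= ah * (Sstar + d)) by (apply Rmult_le_compat_l; lra).
  unfold d in *; repeat split; lra.
Qed.

Lemma Sstar_pos : 0 < Sstar.
Proof. apply Rmult_lt_0_compat; [apply Rdiv_lt_0_compat|]; lra. Qed.

Lemma susceptible_fraction_bounds t : 0 <= t -> 0 < S t / N t <= 1.
Proof.
  intros Ht; pose proof (N_pos t Ht); destruct (Hpos t Ht) as (? & ? & ? & ? & ?).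
  split; [apply Rdiv_lt_0_compat; lra|].
  apply (Rmult_le_reg_r (N t)); [lra|].
  unfold Rdiv; rewrite Rmult_assoc, Rinv_l, HN; lra.
Qed.

Lemma nonsusceptible_fraction_vanishes eps : 0 < eps -> at_top (fun t => 1 - S t / N t <= eps).
Proof.
  intros Heps.
  destruct threshold_margin as (d & c & Hd & Hc & Hmargin).
  apply eventually_le_of_logistic_decay with (c := c)
    (dx := fun t => 0 - ((b * (1 - N t / K) - a1 * I1 t - a2 * I2 t - ah * I12 t - m0) * S t * N t
       - S t * (b * (1 - N t / K) * N t - m0 * S t - m1 * I1 t - m2 * I2 t - m3 * I12 t
                - m4 * Rc t)) / N t ^ 2); [lra | | lra].
  destruct (N_eventually_le d Hd) as [M HM].
  exists (Rmax M 0); intros t Ht.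
  pose proof (Rmax_l M 0); pose proof (Rmax_r M 0).
  destruct (Hpos t ltac:(lra)) as (? & ? & ? & ? & ?).
  pose proof (N_pos t ltac:(lra)); pose proof (susceptible_fraction_bounds t ltac:(lra)).
  cbv beta; refine (conj _ (conj _ (conj _ _))); [| | lra | lra].
  - apply is_derive_Rminus; [apply is_derive_Rconst|].
    apply is_derive_div; [apply HdS; lra | apply HdN; lra | apply Rgt_not_eq; lra].
  - destruct (Hmargin (N t) (HM t ltac:(lra))) as (? & ? & ? & ?).
    apply susceptible_fraction_deriv_le; auto; lra.
Qed.

Lemma infected_eventually_le eps : 0 < eps -> at_top (fun t => N t - S t <= eps).
Proof.
  intros Heps; pose proof Sstar_pos.
  destruct (nonsusceptible_fraction_vanishes (eps / (Sstar + 1))) as [M1 HM1].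
  { apply Rdiv_lt_0_compat; lra. }
  destruct (N_eventually_le 1 ltac:(lra)) as [M2 HM2].
  exists (Rmax (Rmax M1 M2) 0); intros t Ht.
  pose proof (Rmax_l (Rmax M1 M2) 0); pose proof (Rmax_r (Rmax M1 M2) 0);
    pose proof (Rmax_l M1 M2); pose proof (Rmax_r M1 M2).
  specialize (HM1 t ltac:(lra)); specialize (HM2 t ltac:(lra)).
  pose proof (N_pos t ltac:(lra)); pose proof (susceptible_fraction_bounds t ltac:(lra)).
  replace (N t - S t) with ((1 - S t / N t) * N t) by (field; lra).
  apply (Rmult_le_compat_l (1 - S t / N t)) in HM2; [|lra].
  assert (HB : 0 < Sstar + 1) by lra; set (B := Sstar + 1) in *.
  apply (Rmult_le_compat_r B) in HM1; [|lra].
  replace (eps / B * B) with eps in HM1 by (field; lra); lra.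
Qed.

Lemma sq_dist_Sstar_deriv_le t l :
  0 <= t -> 0 < l -> l <= N t -> N t <= Sstar + 1 ->
  2 * (N t - Sstar) *
    (b * (1 - N t / K) * N t - m0 * S t - m1 * I1 t - m2 * I2 t - m3 * I12 t - m4 * Rc t)
  <= - (2 * (b / K) * l) * ((N t - Sstar) * (N t - Sstar))
     + 2 * ((Sstar + 1) * (m1 + m2 + m3 + m4 - 4 * m0)) * (N t - S t).
Proof.
  intros Ht Hl HlN HNS; pose proof Sstar_pos; pose proof (N_pos t Ht).
  assert (HbK : 0 < b / K) by (apply Rdiv_lt_0_compat; lra).
  rewrite N_growth_eq; destruct (excess_mortality_bounds t Ht) as [HP0 HP1].
  set (w := N t - Sstar) in *.
  replace (2 * w * (b / K * (Sstar - N t) * N t - excess_mortality t))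
    with (- (2 * (b / K) * N t) * (w * w) + 2 * (- w) * excess_mortality t) by (unfold w; ring).
  assert (- (2 * (b / K) * N t) * (w * w) <= - (2 * (b / K) * l) * (w * w))
    by (apply Rmult_le_compat_r; [apply Rle_0_sqr | nra]).
  assert (- w * excess_mortality t <= (Sstar + 1) * excess_mortality t)
    by (apply Rmult_le_compat_r; unfold w; lra).
  assert ((Sstar + 1) * excess_mortality t
          <= (Sstar + 1) * ((m1 + m2 + m3 + m4 - 4 * m0) * (N t - S t)))
    by (apply Rmult_le_compat_l; lra).
  lra.
Qed.

Lemma N_eventually_close eps : 0 < eps -> at_top (fun t => Rabs (N t - Sstar) <= eps).
Proof.
  intros Heps; pose proof Sstar_pos.
  destruct N_lower_bound as [l [Hl Hlow]].
  assert (HB : 0 < (Sstar + 1) * (m1 + m2 + m3 + m4 - 4 * m0)) by (apply Rmult_lt_0_compat; lra).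
  set (B := (Sstar + 1) * (m1 + m2 + m3 + m4 - 4 * m0)) in *.
  assert (HV : forall eta, 0 < eta -> at_top (fun t =>
    is_derive (fun u => (N u - Sstar) * (N u - Sstar)) t (2 * (N t - Sstar) *
      (b * (1 - N t / K) * N t - m0 * S t - m1 * I1 t - m2 * I2 t - m3 * I12 t - m4 * Rc t))
    /\ 2 * (N t - Sstar) *
      (b * (1 - N t / K) * N t - m0 * S t - m1 * I1 t - m2 * I2 t - m3 * I12 t - m4 * Rc t)
    <= - (2 * (b / K) * l) * ((N t - Sstar) * (N t - Sstar)) + eta)).
  { intros eta Heta.
    destruct (N_eventually_le 1 ltac:(lra)) as [M1 HM1].
    destruct (infected_eventually_le (eta / (2 * B))) as [M2 HM2].
    { apply Rdiv_lt_0_compat; lra. }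
    exists (Rmax (Rmax M1 M2) 1); intros t Ht.
    pose proof (Rmax_l (Rmax M1 M2) 1); pose proof (Rmax_r (Rmax M1 M2) 1);
      pose proof (Rmax_l M1 M2); pose proof (Rmax_r M1 M2).
    specialize (HM1 t ltac:(lra)); specialize (HM2 t ltac:(lra)); specialize (Hlow t ltac:(lra)).
    split; [apply is_derive_sq_sub, HdN; lra|].
    eapply Rle_trans; [apply (sq_dist_Sstar_deriv_le t l); lra|].
    apply (Rmult_le_compat_l (2 * B)) in HM2; [|lra].
    replace (2 * B * (eta / (2 * B))) with eta in HM2 by (field; lra).
    fold B; lra. }
  assert (HbK : 0 < b / K) by (apply Rdiv_lt_0_compat; lra).
  generalize (eventually_le_of_vanishing_forcing _ _ (2 * (b / K) * l) ltac:(nra) HV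
    (eps * eps) ltac:(nra)).
  apply filter_imp; intros t Ht.
  apply Rabs_le; split; nra.
Qed.

Lemma infected_vanishes : is_lim (fun t => N t - S t) p_infty 0.
Proof.
  apply is_lim_of_eventually_abs_le; intros eps Heps.
  generalize (filter_and _ _ (infected_eventually_le eps Heps)
    (ex_intro (fun M => forall t, M < t -> 0 <= t) 0 (fun t Ht => Rlt_le _ _ Ht))).
  apply filter_imp; intros t [Hle Ht].
  rewrite HN; destruct (Hpos t Ht) as (? & ? & ? & ? & ?).
  rewrite HN in Hle; apply Rabs_le; lra.
Qed.

Lemma N_converges : is_lim N p_infty Sstar.
Proof. apply is_lim_of_eventually_abs_le, N_eventually_close. Qed.

End TotalPopulation.

Lemma is_solution_nonneg
  (b K a1 a2 a3 be1 be2 g1 g2 e1 e2 r1 r2 r3 m0 m1' m2' m3' m4' : R)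
  (S I1 I2 I12 Rc : R -> R) :
  0 <= be1 -> 0 <= be2 -> 0 <= g1 -> 0 <= g2 -> 0 <= r1 -> 0 <= r2 -> 0 <= r3 ->
  is_solution b K a1 a2 a3 be1 be2 g1 g2 e1 e2 r1 r2 r3 m0 m1' m2' m3' m4' S I1 I2 I12 Rc ->
  0 < S 0 -> 0 <= I1 0 -> 0 <= I2 0 -> 0 <= I12 0 -> 0 <= Rc 0 ->
  forall t, 0 <= t -> 0 < S t /\ 0 <= I1 t /\ 0 <= I2 t /\ 0 <= I12 t /\ 0 <= Rc t.
Proof.
  intros Hbe1 Hbe2 Hg1 Hg2 Hr1 Hr2 Hr3 (HS & HI1 & HI2 & HI12 & HRc & Hd) HS0 HI10 HI20 HI120 HRc0.
  set (N t := S t + I1 t + I2 t + I12 t + Rc t).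
  apply (quasipositive_pos S I1 I2 I12 Rc
    (fun t => b * (1 - N t / K) - a1 * I1 t - a2 * I2 t - (be1 + be2 + a3) * I12 t - m0)
    (fun t => b * (1 - N t / K) + a1 * S t - e1 * I12 t - g1 * I2 t - (r1 + m1'))
    (fun t => b * (1 - N t / K) + a2 * S t - e2 * I12 t - g2 * I1 t - (r2 + m2'))
    (fun t => b * (1 - N t / K) + a3 * S t + e1 * I1 t + e2 * I2 t - (r3 + m3'))
    (fun t => b * (1 - N t / K) - m4')
    be1 be2 (g1 + g2) r1 r2 r3); auto; try lra;
    try (intros t Ht; now apply Hd);
    unfold N, Rdiv; repeat first
      [ apply bounded_on_compacts_const | apply bounded_on_compacts_minus
      | apply bounded_on_compacts_plus | apply bounded_on_compacts_mult
      | apply bounded_on_compacts_of_continuous;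
          [ assumption
          | intros u Hu; destruct (Hd u Hu) as (? & ? & ? & ? & ?); eexists; eassumption ] ].
Qed.

Lemma is_solution_total_deriv
  (b K a1 a2 a3 be1 be2 g1 g2 e1 e2 r1 r2 r3 m0 m1' m2' m3' m4' : R)
  (S I1 I2 I12 Rc : R -> R) :
  is_solution b K a1 a2 a3 be1 be2 g1 g2 e1 e2 r1 r2 r3 m0 m1' m2' m3' m4' S I1 I2 I12 Rc ->
  let N t := S t + I1 t + I2 t + I12 t + Rc t in
  forall t, 0 < t ->
  is_derive N t (b * (1 - N t / K) * N t - m0 * S t - m1' * I1 t - m2' * I2 t - m3' * I12 t
                 - m4' * Rc t).
Proof.
  intros (_ & _ & _ & _ & _ & Hd) N t Ht.
  destruct (Hd t Ht) as (HS & HI1 & HI2 & HI12 & HRc).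
  pose proof (is_derive_Rplus _ _ _ _ _ (is_derive_Rplus _ _ _ _ _
    (is_derive_Rplus _ _ _ _ _ (is_derive_Rplus _ _ _ _ _ HS HI1) HI2) HI12) HRc) as HN.
  unfold N; match type of HN with
  | is_derive _ _ ?l => replace (_ - m4' * Rc t) with l by ring; exact HN
  end.
Qed.

Theorem mainTheorem6
  (b K a1 a2 a3 be1 be2 g1 g2 e1 e2 r1 r2 r3 m0 m1' m2' m3' m4' : R)
  (Hpos : 0 < b /\ 0 < K /\ 0 < a1 /\ 0 < a2 /\ 0 < a3 /\ 0 < be1 /\ 0 < be2 /\
          0 < g1 /\ 0 < g2 /\ 0 < e1 /\ 0 < e2 /\ 0 < r1 /\ 0 < r2 /\ 0 < r3 /\
          0 < m0 /\ 0 < m1' /\ 0 < m2' /\ 0 < m3' /\ 0 < m4')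
  (Hb : m0 < b /\ r1 + m1' < b /\ r2 + m2' < b /\ r3 + m3' < b /\ m4' < b)
  (Hmu : m0 < m4' /\ m4' < m1' /\ m4' < m2' /\ m4' < m3')
  (Hsig : (r1 + m1' - m0) / a1 < (r2 + m2' - m0) / a2 /\
          (r2 + m2' - m0) / a2 < (r3 + m3' - m0) / a3)
  (Hthr : K / b * (b - m0) <
          Rmin ((m1' - m0) / a1)
               (Rmin ((m2' - m0) / a2) ((m3' - m0) / (a3 + be1 + be2))))
  (S I1 I2 I12 Rc : R -> R)
  (Hsol : is_solution b K a1 a2 a3 be1 be2 g1 g2 e1 e2 r1 r2 r3
            m0 m1' m2' m3' m4' S I1 I2 I12 Rc)
  (HS0 : 0 < S 0) (HI10 : 0 <= I1 0) (HI20 : 0 <= I2 0)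
  (HI120 : 0 <= I12 0) (HR0 : 0 <= Rc 0) :
  is_lim I1 p_infty 0 /\ is_lim I2 p_infty 0 /\ is_lim I12 p_infty 0 /\
  is_lim Rc p_infty 0 /\ is_lim S p_infty (K / b * (b - m0)).
Proof.
  destruct Hpos as
    (Hb0 & HK & Ha1 & Ha2 & Ha3 & Hbe1 & Hbe2 & Hg1 & Hg2 & _ & _ & Hr1 & Hr2 & Hr3 & _).
  destruct Hb as (Hm0b & Hm1b & Hm2b & Hm3b & _), Hmu as (Hm04 & Hm41 & Hm42 & Hm43).
  assert (Hnn : forall t, 0 <= t ->
    0 < S t /\ 0 <= I1 t /\ 0 <= I2 t /\ 0 <= I12 t /\ 0 <= Rc t)
    by (apply (is_solution_nonneg b K a1 a2 a3 be1 be2 g1 g2 e1 e2 r1 r2 r3 m0 m1' m2' m3' m4');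
        auto; lra).
  set (N t := S t + I1 t + I2 t + I12 t + Rc t).
  assert (HdN : forall t, 0 < t -> is_derive N t (b * (1 - N t / K) * N t - m0 * S t
    - m1' * I1 t - m2' * I2 t - m3' * I12 t - m4' * Rc t))
    by exact (is_solution_total_deriv _ _ _ _ _ _ _ _ _ _ _ _ _ _ _ _ _ _ _ _ _ _ _ _ Hsol).
  assert (HdS : forall t, 0 < t -> is_derive S t
    ((b * (1 - N t / K) - a1 * I1 t - a2 * I2 t - (be1 + be2 + a3) * I12 t - m0) * S t))
    by (intros t Ht; destruct Hsol as (_ & _ & _ & _ & _ & Hd); exact (proj1 (Hd t Ht))).
  replace (a3 + be1 + be2) with (be1 + be2 + a3) in Hthr by ring.
  assert (HJ : is_lim (fun t => N t - S t) p_infty 0)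
    by (apply (infected_vanishes b K a1 a2 (be1 + be2 + a3) m0 m1' m2' m3' m4' S I1 I2 I12 Rc);
        auto; lra).
  assert (HNlim : is_lim N p_infty (K / b * (b - m0)))
    by (apply (N_converges b K a1 a2 (be1 + be2 + a3) m0 m1' m2' m3' m4' S I1 I2 I12 Rc);
        auto; lra).
  assert (Hsqueeze : forall f : R -> R,
    (forall t, 0 <= t -> 0 <= f t <= N t - S t) -> is_lim f p_infty 0).
  { intros f Hf; apply (is_lim_le_le_loc (fun _ => 0) (fun t => N t - S t));
      [exists 0; intros t Ht; apply Hf; lra | apply is_lim_const | exact HJ]. }
  repeat split; try (apply Hsqueeze; intros t Ht; destruct (Hnn t Ht) as (? & ? & ? & ? & ?);
    unfold N; lra).
  apply (is_lim_ext (fun t => N t - (N t - S t))); [intros; ring|].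
  rewrite <- (Rminus_0_r (K / b * (b - m0))); now apply is_lim_minus'.
Qed.
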